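(* Let $\mathcal E$ be a finite dimensional Hilbert space, $A$ a self-adjoint operator and $B$ a positive contraction on $\mathcal E$, and let $\zeta(z)=\frac{z+1}{z-1}$ for $z\in\mathbb D$. Then $iA+\zeta(z)B-I$ is invertible for every $z\in\mathbb D$, and the function $\psi(z)=(iA+\zeta(z)B+I)(iA+\zeta(z)B-I)^{-1}$ belongs to $\mathcal C$ and satisfies $$0\ge\operatorname{Re}\big[(\psi(z)+I)(\psi(z)-I)^{-1}\big]\ge\operatorname{Re}\big[(z+1)(z-1)^{-1}\big]I\quad\text{for all }z\in\mathbb D.$$
   Context: $\mathbb D$ is the open unit disc. $\mathcal C=\{\psi\in H^\infty_{\mathbb D}(\mathcal B(\mathcal E)):\sup_z\|\psi(z)\|\le1,\ 1\text{ is not an eigenvalue of }\psi(z)\text{ for any }z\in\mathbb D\}$. For an operator $X$, $\operatorname{Re}X=(X+X^* )/2$, and inequalities between self-adjoint operators are in the usual operator order. *)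

From mathcomp Require Import all_boot all_order all_algebra.
From mathcomp Require Import complex.
From mathcomp Require Import all_classical all_reals all_analysis.
Import GRing.Theory Num.Theory.
Import numFieldNormedType.Exports.
Set Implicit Arguments. Unset Strict Implicit. Unset Printing Implicit Defensive.
Local Open Scope ring_scope.
Local Open Scope complex_scope.

Notation Cx R := (R[i]).

Definition adj (R : realType) (m k : nat) (X : 'M[Cx R]_(m, k)) : 'M[Cx R]_(k, m) :=
  (map_mx conjc X)^T.

Definition selfadj (R : realType) (n : nat) (X : 'M[Cx R]_n) : Prop := adj X = X.

Definition psd (R : realType) (n : nat) (X : 'M[Cx R]_n) : Prop :=
  forall v : 'cV[Cx R]_n, 0 <= (adj v *m X *m v) 0 0.

Definition ople (R : realType) (n : nat) (X Y : 'M[Cx R]_n) : Prop := psd (Y - X).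

Definition ReOp (R : realType) (n : nat) (X : 'M[Cx R]_n) : 'M[Cx R]_n :=
  (2%:R)^-1 *: (X + adj X).

Definition vnorm2 (R : realType) (n : nat) (v : 'cV[Cx R]_n) : Cx R :=
  \sum_(i < n) `|v i 0| ^+ 2.

Definition opnorm_le1 (R : realType) (n : nat) (X : 'M[Cx R]_n) : Prop :=
  forall v : 'cV[Cx R]_n, vnorm2 (X *m v) <= vnorm2 v.

Definition pos_contraction (R : realType) (n : nat) (B : 'M[Cx R]_n) : Prop :=
  psd B /\ opnorm_le1 B.

Definition in_disc (R : realType) (z : Cx R) : Prop := `|z| < 1.

(* holomorphic on D: complex differentiable at every point of D
   (the domain (Cx R)^o is a normed space over Cx R, so [derivable f z 1]
   is existence of lim_{h -> 0, h in C} (f (z + h) - f z) / h). *)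
Definition holo_disc (R : realType) (n : nat) (f : (Cx R)^o -> 'M[Cx R]_n) : Prop :=
  forall z, in_disc z -> derivable f z 1.

(* the class C: psi in H^infty_D(B(E)), sup_z ||psi z|| <= 1,
   and 1 is not an eigenvalue of psi z for any z in D *)
Definition classC (R : realType) (n : nat) (psi : (Cx R)^o -> 'M[Cx R]_n) : Prop :=
  holo_disc psi /\
  (forall z, in_disc z -> opnorm_le1 (psi z)) /\
  (forall z, in_disc z -> ~~ eigenvalue (psi z) 1).

Definition zeta (R : realType) (z : Cx R) : Cx R := (z + 1) / (z - 1).

From mathcomp Require Import all_boot all_order all_algebra.
From mathcomp Require Import complex.
From mathcomp Require Import all_classical all_reals all_analysis.
From mathcomp Require Import ring.
Import Order.TTheory GRing.Theory Num.Theory.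
Import numFieldNormedType.Exports.
Set Implicit Arguments. Unset Strict Implicit. Unset Printing Implicit Defensive.
Local Open Scope ring_scope.
Local Open Scope complex_scope.

(* Write T(z) = iA + zeta(z) B.  The whole statement is an instance of the
   Cayley transform of a dissipative matrix: call X dissipative when
   2 Re <X v, v> <= 0 for every vector v.  For such X,
   - X - 1 is invertible (a kernel vector v would give 2|v|^2 <= 0),
   - psi = (X + 1)(X - 1)^-1 is a contraction, because
     |(X + 1) w|^2 - |(X - 1) w|^2 = 4 Re <X w, w> <= 0,
   - 1 is not an eigenvalue of psi, and psi inverts back to
     (psi + 1)(psi - 1)^-1 = X, whose real part is then <= 0.
   T(z) is dissipative on the disc since A is self-adjoint, B >= 0 and
   Re zeta(z) <= 0 there; the lower bound is Re T(z) - Re zeta(z) =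
   Re zeta(z) (B - 1) >= 0, using B <= 1.  Finally psi is holomorphic on the
   disc: by Cramer's rule its entries are rational in the entries of T(z),
   whose denominators do not vanish. *)

Section Scalars.
Variable R : realType.
Local Notation K := (Cx R).

Lemma conjc_ge0 (x : K) : 0 <= x -> conjc x = x.
Proof.
move/ger0_Im; case: x => a b /= ->.
by apply/eqP; rewrite eq_complex /= oppr0 !eqxx.
Qed.

(* Conjugation is a ring morphism; these forms rewrite with [conjc] itself
   rather than with its morphism structure. *)
Lemma conjcD (x y : K) : conjc (x + y) = conjc x + conjc y.
Proof. exact: rmorphD. Qed.

Lemma conjcM (x y : K) : conjc (x * y) = conjc x * conjc y.
Proof. exact: rmorphM. Qed.

Lemma conjc_i : conjc ('i : K) = - 'i.
Proof. by apply/eqP; rewrite eq_complex /= oppr0 !eqxx. Qed.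

Lemma disc_subr1_neq0 (z : K) : in_disc z -> z - 1 != 0.
Proof.
by rewrite /in_disc subr_eq0 => hz; apply/eqP => z1; move: hz; rewrite z1 normr1 ltxx.
Qed.

(* 2 Re zeta(z) = 2 (|z|^2 - 1) / |z - 1|^2 <= 0 on the disc. *)
Lemma zeta_re_le0 (z : K) : in_disc z -> zeta z + conjc (zeta z) <= 0.
Proof.
move=> hz; have hz1 := disc_subr1_neq0 hz.
have hzc1 : conjc z - 1 != 0 by rewrite -conjc1 -rmorphB conjc_eq0.
have -> : zeta z + conjc (zeta z) =
    (2%:R * (z * conjc z - 1)) / ((z - 1) * conjc (z - 1)).
  by rewrite /zeta rmorphM fmorphV rmorphD rmorphB rmorph1; field; rewrite hz1 hzc1.
rewrite -!sqr_normc; apply: mulr_le0_ge0; last by rewrite invr_ge0 exprn_ge0.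
by rewrite pmulr_rle0 ?ltr0n // subr_le0 ltW // exprn_ilt1.
Qed.

End Scalars.

Section Adjoint.
Variable R : realType.
Local Notation K := (Cx R).

Lemma adjD m k (X Y : 'M[K]_(m, k)) : adj (X + Y) = adj X + adj Y.
Proof. by rewrite /adj map_mxD linearD. Qed.

Lemma adjN m k (X : 'M[K]_(m, k)) : adj (- X) = - adj X.
Proof. by rewrite /adj map_mxN linearN. Qed.

Lemma adjB m k (X Y : 'M[K]_(m, k)) : adj (X - Y) = adj X - adj Y.
Proof. by rewrite adjD adjN. Qed.

Lemma adjM m k l (X : 'M[K]_(m, k)) (Y : 'M[K]_(k, l)) :
  adj (X *m Y) = adj Y *m adj X.
Proof. by rewrite /adj map_mxM trmx_mul. Qed.

Lemma adjK m k (X : 'M[K]_(m, k)) : adj (adj X) = X.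
Proof. by apply/matrixP => i j; rewrite /adj !mxE conjcK. Qed.

Lemma adj1 n : adj (1 : 'M[K]_n) = 1.
Proof. by rewrite /adj map_mx1 trmx1. Qed.

End Adjoint.

Section QuadraticForms.
Variables (R : realType) (n : nat).
Local Notation K := (Cx R).
Implicit Types (X Y : 'M[K]_n) (v : 'cV[K]_n).

Definition qform v X : K := (adj v *m X *m v) 0 0.

Definition qform_re v X : K := qform v X + conjc (qform v X).

Lemma qformD v X Y : qform v (X + Y) = qform v X + qform v Y.
Proof. by rewrite /qform mulmxDr mulmxDl mxE. Qed.

Lemma qformB v X Y : qform v (X - Y) = qform v X - qform v Y.
Proof. by rewrite qformD /qform mulmxN mulNmx [in X in _ + X]mxE. Qed.

Lemma qformZ v c X : qform v (c *: X) = c * qform v X.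
Proof. by rewrite /qform -scalemxAr -scalemxAl mxE. Qed.

Lemma qform0 v : qform v 0 = 0.
Proof. by rewrite /qform mulmx0 mul0mx mxE. Qed.

Lemma qform_adj v X : qform v (adj X) = conjc (qform v X).
Proof.
rewrite /qform; transitivity (adj (adj v *m X *m v) 0 0); last by rewrite !mxE.
by rewrite !adjM adjK mulmxA.
Qed.

Lemma qform_selfadj v X : selfadj X -> conjc (qform v X) = qform v X.
Proof. by move=> hX; rewrite -qform_adj hX. Qed.

Lemma qform_psd v X : psd X -> conjc (qform v X) = qform v X.
Proof. by move=> hX; rewrite conjc_ge0 //; exact: hX. Qed.

Lemma vnorm2E v : vnorm2 v = (adj v *m v) 0 0.
Proof.
rewrite /vnorm2 mxE; apply: eq_bigr => i _.
by rewrite sqr_normc /adj !mxE mulrC.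
Qed.

Lemma qform1 v : qform v 1 = vnorm2 v.
Proof. by rewrite /qform mulmx1 vnorm2E. Qed.

Lemma vnorm2_mul X v : vnorm2 (X *m v) = qform v (adj X *m X).
Proof. by rewrite vnorm2E adjM /qform !mulmxA. Qed.

Lemma vnorm2_ge0 v : 0 <= vnorm2 v.
Proof. by apply: sumr_ge0 => i _; rewrite exprn_ge0. Qed.

Lemma vnorm2_eq0 v : vnorm2 v = 0 -> v = 0.
Proof.
move=> /eqP; rewrite psumr_eq0 => [/allP hv|i _]; last by rewrite exprn_ge0.
apply/matrixP => i j; rewrite (ord1 j) mxE.
by have := hv i (mem_index_enum _); rewrite /= sqrf_eq0 normr_eq0 => /eqP.
Qed.

Lemma vnorm2_conj v : conjc (vnorm2 v) = vnorm2 v.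
Proof. by rewrite conjc_ge0 // vnorm2_ge0. Qed.

Lemma qform_ReOp v X : qform v (ReOp X) = 2%:R^-1 * qform_re v X.
Proof. by rewrite /ReOp qformZ qformD qform_adj. Qed.

Lemma vnorm2_addr1 X w :
  vnorm2 ((X + 1) *m w) = vnorm2 (X *m w) + qform_re w X + vnorm2 w.
Proof.
rewrite !vnorm2_mul adjD adj1 mulmxDl !mulmxDr mul1mx !mulmx1.
by rewrite !qformD qform_adj qform1 /qform_re; ring.
Qed.

Lemma vnorm2_subr1 X w :
  vnorm2 ((X - 1) *m w) = vnorm2 (X *m w) - qform_re w X + vnorm2 w.
Proof.
rewrite !vnorm2_mul adjB adj1 mulmxBl !mulmxBr mul1mx !mulmx1.
by rewrite !qformB qform_adj qform1 /qform_re; ring.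
Qed.

(* A positive contraction B satisfies <B v, v> <= |v|^2, i.e. B <= 1:
   0 <= |(B - 1) v|^2 = |B v|^2 - 2 <B v, v> + |v|^2 <= 2 (|v|^2 - <B v, v>). *)
Lemma pos_contraction_qform_le X v : pos_contraction X -> qform v X <= vnorm2 v.
Proof.
case=> Xpsd Xcontr; have := vnorm2_ge0 ((X - 1) *m v).
rewrite vnorm2_subr1 /qform_re qform_psd // => h0.
have hX := Xcontr v.
rewrite -subr_ge0 -(pmulr_rge0 _ (ltr0n K 2)).
have -> : 2%:R * (vnorm2 v - qform v X) =
  (vnorm2 v - vnorm2 (X *m v)) + (vnorm2 (X *m v) - (qform v X + qform v X) + vnorm2 v).
  by ring.
by apply: addr_ge0 => //; rewrite subr_ge0.
Qed.

End QuadraticForms.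

Section CayleyTransform.
Variables (R : realType) (n : nat).
Local Notation K := (Cx R).

Definition dissipative (X : 'M[K]_n) : Prop := forall v, qform_re v X <= 0.

Definition cayley (X : 'M[K]_n) : 'M[K]_n := (X + 1) *m invmx (X - 1).

Variable X : 'M[K]_n.
Hypothesis X_diss : dissipative X.

Lemma dissipative_ReOp_le0 : ople (ReOp X) 0.
Proof.
move=> v; change (0 <= qform v (0 - ReOp X)); rewrite qformB qform0 sub0r qform_ReOp oppr_ge0.
by rewrite pmulr_rle0 ?invr_gt0 ?ltr0n.
Qed.

(* If (X - 1) v = 0 then |v|^2 = <X v, v>, so 2 |v|^2 <= 0 and v = 0. *)
Lemma cayley_den_unit : X - 1 \in unitmx.
Proof.
rewrite unitmxE unitfE -det_tr; apply/negP => /det0P[u u_neq0 hu].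
have kerv : (X - 1) *m u^T = 0 by rewrite -(trmxK (X - 1)) -trmx_mul hu trmx0.
have : qform u^T (X - 1) = 0 by rewrite /qform -mulmxA kerv mulmx0 mxE.
rewrite qformB qform1 => /eqP; rewrite subr_eq0 => /eqP qXv.
have := X_diss u^T; rewrite /qform_re qXv vnorm2_conj.
rewrite -mulr2n -mulr_natr pmulr_lle0 ?ltr0n // => hle.
have /vnorm2_eq0 u0 : vnorm2 u^T = 0 by apply/eqP; rewrite eq_le hle vnorm2_ge0.
by move: u_neq0; rewrite -(trmxK u) u0 trmx0 eqxx.
Qed.

Let Si := invmx (X - 1).

Lemma cayley_den_mulmxV : (X - 1) *m Si = 1.
Proof. exact: mulmxV cayley_den_unit. Qed.

Lemma cayley_den_mulVmx : Si *m (X - 1) = 1.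
Proof. exact: mulVmx cayley_den_unit. Qed.

Lemma addr1_subr1 : X + 1 - (X - 1) = 2%:R *: (1 : 'M[K]_n).
Proof. by rewrite opprB addrA -(addrA X) addrAC subrr add0r scaler_nat mulr2n. Qed.

Lemma cayley_subr1 : cayley X - 1 = 2%:R *: Si.
Proof.
rewrite /cayley -[X in _ - X]cayley_den_mulmxV -mulmxBl.
by rewrite addr1_subr1 -scalemxAl mul1mx.
Qed.

Lemma cayley_addr1 : cayley X + 1 = (2%:R *: X) *m Si.
Proof.
rewrite /cayley -[X in _ + X]cayley_den_mulmxV -mulmxDl.
by rewrite addrACA subrr addr0 -mulr2n -scaler_nat.
Qed.

(* |psi v|^2 - |v|^2 = |(X + 1) w|^2 - |(X - 1) w|^2 = 4 Re <X w, w>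
   for w = (X - 1)^-1 v. *)
Lemma cayley_contraction : opnorm_le1 (cayley X).
Proof.
move=> v; set w := Si *m v.
have -> : cayley X *m v = (X + 1) *m w by rewrite /cayley /w mulmxA.
have -> : v = (X - 1) *m w by rewrite /w mulmxA cayley_den_mulmxV mul1mx.
rewrite vnorm2_addr1 vnorm2_subr1 lerD2r -subr_ge0.
have -> : vnorm2 (X *m w) - qform_re w X - (vnorm2 (X *m w) + qform_re w X) =
  - (qform_re w X + qform_re w X) by ring.
by rewrite oppr_ge0 -[0]addr0 lerD.
Qed.

(* An eigenvector u psi = u gives u (X + 1) = u (X - 1), i.e. 2 u = 0. *)
Lemma cayley_noeig : ~~ eigenvalue (cayley X) 1.
Proof.
apply/eigenvalueP => -[u hu u_neq0].
have : u *m (X + 1) = u *m (X - 1).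
  have e : X + 1 = cayley X *m (X - 1) by rewrite -mulmxA cayley_den_mulVmx mulmx1.
  by rewrite {1}e mulmxA hu scale1r.
move/eqP; rewrite -subr_eq0 -mulmxBr addr1_subr1 -scalemxAr mulmx1 scaler_eq0.
by rewrite pnatr_eq0 (negPf u_neq0).
Qed.

Lemma cayleyK : cayley (cayley X) = X.
Proof.
have two_unit : (2%:R : K) \is a GRing.unit by rewrite unitfE pnatr_eq0.
rewrite /cayley -/(cayley X) cayley_addr1 cayley_subr1.
rewrite invmxZ ?unitmxZ ?unitmx_inv ?cayley_den_unit // /Si invmxK.
rewrite -scalemxAr -!scalemxAl scalerA mulVr // scale1r -mulmxA.
by rewrite -/Si cayley_den_mulVmx mulmx1.
Qed.

End CayleyTransform.

Section PencilT.
Variables (R : realType) (n : nat) (A B : 'M[Cx R]_n).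
Hypotheses (A_selfadj : selfadj A) (B_poscontr : pos_contraction B).
Local Notation K := (Cx R).

Definition Tpencil (z : K) : 'M[K]_n := 'i *: A + zeta z *: B.

(* 2 Re <T(z) v, v> = 2 Re zeta(z) <B v, v>: the iA part is skew-adjoint. *)
Lemma qform_re_Tpencil z v :
  qform_re v (Tpencil z) = (zeta z + conjc (zeta z)) * qform v B.
Proof.
rewrite /qform_re /Tpencil qformD !qformZ; set c := zeta z.
rewrite conjcD !conjcM conjc_i.
rewrite qform_selfadj // qform_psd //; last by case: B_poscontr.
by ring.
Qed.

Lemma Tpencil_dissipative z : in_disc z -> dissipative (Tpencil z).
Proof.
move=> hz v; rewrite qform_re_Tpencil mulr_le0_ge0 ?zeta_re_le0 //.
by case: B_poscontr => Bpsd _; exact: Bpsd.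
Qed.

(* Re T(z) - Re zeta(z) = Re zeta(z) (B - 1) >= 0 since Re zeta(z) <= 0 and B <= 1. *)
Lemma Tpencil_ReOp_ge z : in_disc z -> ople (ReOp (zeta z)%:M) (ReOp (Tpencil z)).
Proof.
move=> hz v; change (0 <= qform v (ReOp (Tpencil z) - ReOp (zeta z)%:M)).
rewrite qformB !qform_ReOp qform_re_Tpencil -scalemx1 /qform_re qformZ qform1.
rewrite (conjcM (zeta z)) vnorm2_conj -mulrBr pmulr_rge0 ?invr_gt0 ?ltr0n //.
have -> : (zeta z + conjc (zeta z)) * qform v B -
    (zeta z * vnorm2 v + conjc (zeta z) * vnorm2 v) =
  (zeta z + conjc (zeta z)) * (qform v B - vnorm2 v) by ring.
rewrite mulr_le0 ?zeta_re_le0 // subr_le0.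
exact: pos_contraction_qform_le.
Qed.

End PencilT.

Section MatrixDerivability.
Local Open Scope classical_set_scope.
Variables (K : numFieldType) (V : normedModType K).

Lemma cvg_mx_entries (T : Type) (F : set_system T) (FF : Filter F) m p
    (f : T -> 'M[K]_(m, p)) (l : 'M[K]_(m, p)) :
  (forall i j, (fun x => f x i j) @ F --> l i j) -> f @ F --> l.
Proof.
move=> fl; apply/cvgrPdist_lt => e e0.
have : \forall x \near F, forall i j, `|l i j - f x i j| < e.
  apply: filter_forall => i; apply: filter_forall => j.
  exact: (cvgrPdist_lt _ _).1 (fl i j) e e0.
apply: filterS => x fxl.
have : ball l e (f x) by split => // i j; exact: fxl.
by rewrite -ball_normE.
Qed.

Lemma derivable_mx_entries m p (M : V -> 'M[K]_(m, p)) x v :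
  (forall i j, derivable (fun y => M y i j) x v) -> derivable M x v.
Proof.
move=> Mder; apply/cvg_ex => /=.
exists (\matrix_(i < m, j < p) sval (cid ((cvg_ex _).1 (Mder i j)))).
apply: cvg_mx_entries => i j; rewrite mxE.
apply: cvg_trans (svalP (cid ((cvg_ex _).1 (Mder i j)))).
by apply: near_eq_cvg; near=> h; rewrite /= !mxE.
Unshelve. all: by end_near. Qed.

Lemma derivable_bigsum (I : Type) (r : seq I) (P : pred I) (F : I -> V -> K) x v :
  (forall i, P i -> derivable (F i) x v) ->
  derivable (fun y => \sum_(i <- r | P i) F i y) x v.
Proof.
move=> Fder; elim: r => [|a r IHr].
  by under eq_fun do rewrite big_nil; exact: derivable_cst.
under eq_fun do rewrite big_cons.
by case: ifP => // Pa; exact: derivableD (Fder a Pa) IHr.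
Qed.

Lemma derivable_bigprod (I : Type) (r : seq I) (P : pred I) (F : I -> V -> K) x v :
  (forall i, P i -> derivable (F i) x v) ->
  derivable (fun y => \prod_(i <- r | P i) F i y) x v.
Proof.
move=> Fder; elim: r => [|a r IHr].
  by under eq_fun do rewrite big_nil; exact: derivable_cst.
under eq_fun do rewrite big_cons.
by case: ifP => // Pa; exact: derivableM (Fder a Pa) IHr.
Qed.

(* The determinant is a polynomial in the entries (Leibniz formula). *)
Lemma derivable_det k (M : V -> 'M[K]_k) x v :
  (forall i j, derivable (fun y => M y i j) x v) ->
  derivable (fun y => \det (M y)) x v.
Proof.
move=> M_der; apply: derivable_bigsum => s _.
by apply: derivableM; [exact: derivable_cst | exact: derivable_bigprod].
Qed.

(* The entries of the adjugate are signed minors, hence determinants. *)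
Lemma derivable_adj k (M : V -> 'M[K]_k) x v :
  (forall i j, derivable (fun y => M y i j) x v) ->
  forall i j, derivable (fun y => \adj (M y) i j) x v.
Proof.
move=> M_der i j; under eq_fun do rewrite mxE /cofactor.
apply: derivableM; first exact: derivable_cst.
by apply: derivable_det => a b; under eq_fun do rewrite !mxE; exact: M_der.
Qed.

(* By Cramer's rule, N M^-1 is derivable at x if M is invertible near x. *)
Lemma derivable_mulmx_invmx k (N M : V -> 'M[K]_k) x v :
  (forall i j, derivable (fun y => N y i j) x v) ->
  (forall i j, derivable (fun y => M y i j) x v) ->
  (\forall y \near x, M y \in unitmx) ->
  derivable (fun y => N y *m invmx (M y)) x v.
Proof.
move=> N_der M_der M_unit.
pose F y := N y *m ((\det (M y))^-1 *: \adj (M y)).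
apply: (@near_eq_derivable _ _ _ F).
  by apply: filterS M_unit => y yunit; rewrite /F /invmx yunit.
apply: derivable_mx_entries => i j; rewrite /F.
under eq_fun do rewrite mxE; apply: derivable_bigsum => l _.
apply: derivableM; first exact: N_der.
under eq_fun do rewrite mxE; apply: derivableM; last exact: derivable_adj.
apply: derivableV; last exact: derivable_det.
by rewrite -unitfE -unitmxE; exact: nbhs_singleton M_unit.
Qed.

End MatrixDerivability.

Section Holomorphy.
Variables (R : realType) (n : nat) (A B : 'M[Cx R]_n).
Hypotheses (A_selfadj : selfadj A) (B_poscontr : pos_contraction B).
Local Notation K := (Cx R).

Lemma near_in_disc (z : K) : in_disc z -> \forall y \near (z : K^o), in_disc y.
Proof.
move=> hz; have r_gt0 : 0 < 1 - `|z| by rewrite subr_gt0.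
apply: filterS (near_ball (z : K^o) (1 - `|z|) r_gt0) => y.
rewrite -ball_normE /ball_ /= /in_disc => hy.
rewrite -(subrKC z y) (le_lt_trans (ler_normD _ _)) //.
by rewrite distrC -(subrKC `|z| 1) ltrD2l.
Qed.

Lemma derivable_zeta (z : K) : z - 1 != 0 -> derivable (fun y : K^o => zeta y : K^o) z 1.
Proof.
by move=> hz1; apply: derivableM => //; exact: derivableV.
Qed.

Lemma derivable_Tpencil (C : 'M[K]_n) (z : K) : in_disc z ->
  forall i j, derivable (fun y : K^o => (Tpencil A B y + C) i j : K^o) z 1.
Proof.
move=> hz i j; under eq_fun do rewrite !mxE.
apply: derivableD; last exact: derivable_cst.
apply: derivableD; first exact: derivable_cst.
by apply: derivableM; [exact: derivable_zeta (disc_subr1_neq0 hz) | exact: derivable_cst].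
Qed.

Lemma cayley_Tpencil_holo : holo_disc (fun z : K^o => cayley (Tpencil A B z)).
Proof.
move=> z hz; apply: derivable_mulmx_invmx; try exact: derivable_Tpencil.
apply: filterS (near_in_disc hz) => y hy.
exact: cayley_den_unit (Tpencil_dissipative A_selfadj B_poscontr hy).
Qed.

End Holomorphy.

Theorem proposition4p4 (R : realType) (n : nat) (A B : 'M[Cx R]_n) :
  selfadj A -> pos_contraction B ->
  let T := fun z : Cx R => 'i *: A + zeta z *: B in
  (forall z : Cx R, in_disc z -> (T z - 1) \in unitmx) /\
  (let psi := fun z : (Cx R)^o => (T z + 1) *m invmx (T z - 1) in
   classC psi /\
   forall z : Cx R, in_disc z ->
     ople (ReOp ((psi z + 1) *m invmx (psi z - 1))) 0 /\
     ople (ReOp (zeta z)%:M) (ReOp ((psi z + 1) *m invmx (psi z - 1)))).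
Proof.
move=> A_selfadj B_poscontr T.
have T_diss z : in_disc z -> dissipative (T z).
  exact: Tpencil_dissipative.
split=> [z hz|psi]; first exact: cayley_den_unit (T_diss z hz).
split.
  split; first exact: cayley_Tpencil_holo.
  by split=> z hz; [exact: cayley_contraction (T_diss z hz) | exact: cayley_noeig (T_diss z hz)].
move=> z hz; have psiK : (psi z + 1) *m invmx (psi z - 1) = T z.
  exact: cayleyK (T_diss z hz).
rewrite psiK; split; first exact: dissipative_ReOp_le0 (T_diss z hz).
exact: (Tpencil_ReOp_ge A_selfadj B_poscontr hz).
Qed.
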